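(* Let $\delta\in(0,1)$ and let $(G,\beta,\gamma,\lambda)$ be an anti-ferromagnetic two-spin system whose graph $G$ has maximum degree $\Delta$. Let $\chi=+1$ if $\lambda\le(\gamma/\beta)^{\Delta/2}$ and $\chi=-1$ otherwise. Then: (1) For every $1\le d<\Delta$: if $(\beta,\gamma,\lambda)$ is $d$-unique with gap $\delta$, then $(\beta,\gamma,(1+\frac\delta2)^\chi\lambda)$ is $d$-unique with gap $\frac\delta2$. (2) Suppose moreover that $(\beta,\gamma,\lambda)$ is $(\Delta-1)$-unique with gap $\delta$ and $\Delta-1>(1-\frac\delta2)\overline\Delta$, where $\overline\Delta=\frac{1+\sqrt{\beta\gamma}}{1-\sqrt{\beta\gamma}}$. Then $\lambda\le(\gamma/\beta)^{\Delta/2}$ implies $(1+\frac\delta2)^\chi\lambda<(\gamma/\beta)^{\Delta/2}$, and $\lambda>(\gamma/\beta)^{\Delta/2}$ implies $(1+\frac\delta2)^\chi\lambda>(\gamma/\beta)^{\Delta/2}$.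
   Context: Anti-ferromagnetic two-spin parameters: $0\le\beta\le\gamma$, $\gamma>0$, $\lambda>0$, $\beta\gamma<1$. For an integer $d\ge1$, $(\beta,\gamma,\lambda)$ is $d$-unique with gap $\delta$ if $\frac{d(1-\beta\gamma)\hat x_d}{(\beta\hat x_d+1)(\hat x_d+\gamma)}\le1-\delta$, where $\hat x_d>0$ is the unique fixed point of $F_d(x)=\lambda\left(\frac{\beta x+1}{x+\gamma}\right)^d$. Convention: $(\gamma/\beta)^{\Delta/2}=+\infty$ when $\beta=0$. *)

From HB Require Import structures.
From mathcomp Require Import all_boot all_order all_algebra.
Set Implicit Arguments. Unset Strict Implicit. Unset Printing Implicit Defensive.
Import Order.TTheory GRing.Theory Num.Theory.
Local Open Scope ring_scope.

Definition antiferro {R : rcfType} (beta gamma lambda : R) : Prop :=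
  0 <= beta /\ beta <= gamma /\ 0 < gamma /\ 0 < lambda /\ beta * gamma < 1.

Definition Fd {R : rcfType} (d : nat) (beta gamma lambda x : R) : R :=
  lambda * ((beta * x + 1) / (x + gamma)) ^+ d.

Definition d_unique {R : rcfType} (d : nat) (beta gamma lambda delta : R) : Prop :=
  exists xh : R, 0 < xh /\ Fd d beta gamma lambda xh = xh /\
    (forall y : R, 0 < y -> Fd d beta gamma lambda y = y -> y = xh) /\
    d%:R * (1 - beta * gamma) * xh / ((beta * xh + 1) * (xh + gamma)) <= 1 - delta.

(* lambda <= (gamma/beta)^(Delta/2), with the convention that the right-hand
   side is +oo when beta = 0; (gamma/beta)^(Delta/2) = sqrt(gamma/beta)^Delta. *)
Definition le_thr {R : rcfType} (beta gamma : R) (Delta : nat) (x : R) : Prop :=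
  beta = 0 \/ x <= Num.sqrt (gamma / beta) ^+ Delta.
Definition lt_thr {R : rcfType} (beta gamma : R) (Delta : nat) (x : R) : Prop :=
  beta = 0 \/ x < Num.sqrt (gamma / beta) ^+ Delta.
Definition gt_thr {R : rcfType} (beta gamma : R) (Delta : nat) (x : R) : Prop :=
  beta <> 0 /\ Num.sqrt (gamma / beta) ^+ Delta < x.

Definition shifted {R : rcfType} (beta gamma : R) (Delta : nat) (lambda delta : R) : R :=
  if (beta == 0) || (lambda <= Num.sqrt (gamma / beta) ^+ Delta)
  then (1 + delta / 2) * lambda
  else (1 + delta / 2)^-1 * lambda.

Definition Delta_bar {R : rcfType} (beta gamma : R) : R :=
  (1 + Num.sqrt (beta * gamma)) / (1 - Num.sqrt (beta * gamma)).

Definition simple_graph {V : finType} (E : rel V) : Prop :=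
  symmetric E /\ irreflexive E.
Definition max_degree {V : finType} (E : rel V) : nat :=
  \max_(v : V) #|[set u | E v u]|.

From HB Require Import structures.
From mathcomp Require Import all_boot all_order all_algebra.
From mathcomp Require Import ring lra.
Set Implicit Arguments. Unset Strict Implicit. Unset Printing Implicit Defensive.
Import Order.TTheory GRing.Theory Num.Theory.
Local Open Scope ring_scope.

(* Since x |-> (beta x + 1)/(x + gamma) is decreasing, the positive fixed
   point of F_d is unique and increasing in lambda; moreover if lambda and mu
   are within a factor k >= 1 of each other, so are their fixed points, and
   then so are the gap quantities d (1 - beta gamma) x / ((beta x + 1)(x + gamma)).
   Part (1) follows because (1 + delta/2)(1 - delta) <= 1 - delta/2.
   For part (2), s = sqrt(gamma/beta) is the fixed point of F_(Delta-1) at the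
   threshold lambda = s^Delta, and its gap quantity is (Delta-1)/Delta_bar,
   which exceeds 1 - delta/2 >= (1 + delta/2)(1 - delta).  Hence lambda and the
   threshold are never within a factor 1 + delta/2 of each other, so shifting
   lambda by that factor cannot cross the threshold. *)

Definition mobius {R : rcfType} (beta gamma x : R) : R :=
  (beta * x + 1) / (x + gamma).

(* |x F_d'(x) / F_d(x)|, which is |F_d'(x)| at a fixed point. *)
Definition Fd_slope {R : rcfType} (d : nat) (beta gamma x : R) : R :=
  d%:R * (1 - beta * gamma) * x / ((beta * x + 1) * (x + gamma)).

Section FixedPoints.
Variables (R : rcfType) (beta gamma : R).
Hypotheses (beta_ge0 : 0 <= beta) (gamma_gt0 : 0 < gamma)
  (beta_gamma_lt1 : beta * gamma < 1).

(* [lra] does not see section hypotheses unless they are copied into the goal. *)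
Local Ltac lra_bg := move: beta_ge0 gamma_gt0 beta_gamma_lt1 => ? ? ?; lra.

Lemma mobius_gt0 (x : R) : 0 < x -> 0 < mobius beta gamma x.
Proof.
move=> x_gt0; have := mulr_ge0 beta_ge0 (ltW x_gt0); rewrite /mobius.
by move=> bx_ge0; apply: divr_gt0; lra_bg.
Qed.

Lemma mobius_le_inv (x : R) : 0 < x -> mobius beta gamma x <= gamma^-1.
Proof.
move=> x_gt0; rewrite /mobius ler_pdivrMr; last by lra_bg.
rewrite mulrC ler_pdivlMl //.
have := ler_wpM2r (ltW x_gt0) (ltW beta_gamma_lt1); lra.
Qed.

Lemma mobius_le (a b : R) : 0 < a -> a <= b -> mobius beta gamma b <= mobius beta gamma a.
Proof.
move=> a_gt0 ab; rewrite /mobius ler_pdivrMr; last by lra_bg.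
rewrite mulrAC ler_pdivlMr; last by lra_bg.
have : 0 <= (b - a) * (1 - beta * gamma) by apply: mulr_ge0; lra_bg.
lra.
Qed.

Lemma mobiusX_le d (a b : R) : 0 < a -> a <= b ->
  mobius beta gamma b ^+ d <= mobius beta gamma a ^+ d.
Proof.
move=> a_gt0 ab; apply: lerXn2r; rewrite ?nnegrE.
- by apply/ltW/mobius_gt0; lra.
- exact/ltW/mobius_gt0.
exact: mobius_le.
Qed.

Variable d : nat.

Let F (lam x : R) := Fd d beta gamma lam x.

Lemma Fd_mobius (lam x : R) : F lam x = lam * mobius beta gamma x ^+ d.
Proof. by []. Qed.

Lemma Fd_gt0 (lam x : R) : 0 < lam -> 0 < x -> 0 < F lam x.
Proof. by move=> lam_gt0 x_gt0; rewrite Fd_mobius mulr_gt0 // exprn_gt0 ?mobius_gt0. Qed.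

(* Clearing denominators turns [x - F lam x] into a polynomial with the same sign. *)
Lemma horner_fixed_poly (lam t : R) : 0 < t ->
  ('X * ('X + gamma%:P) ^+ d - lam%:P * (beta%:P * 'X + 1) ^+ d).[t] =
  (t + gamma) ^+ d * (t - F lam t).
Proof.
move=> t_gt0; have tg_neq0 : (t + gamma) ^+ d != 0 by rewrite expf_neq0 // gt_eqF //; lra_bg.
rewrite !hornerE Fd_mobius /mobius expr_div_n mulrBr.
by congr (_ - _); [rewrite mulrC | field].
Qed.

Lemma Fd_fixed_between (lam a b : R) : 0 < a -> a <= b ->
  a <= F lam a -> F lam b <= b -> exists2 x, a <= x <= b & F lam x = x.
Proof.
move=> a_gt0 ab Fa Fb.
have pos (t : R) : 0 < t -> 0 < (t + gamma) ^+ d by move=> t_gt0; rewrite exprn_gt0 //; lra_bg.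
have b_gt0 : 0 < b by lra_bg.
set P := ('X * ('X + gamma%:P) ^+ d - lam%:P * (beta%:P * 'X + 1) ^+ d).
have : P.[a] <= 0 <= P.[b].
  rewrite !horner_fixed_poly //; apply/andP; split;
    [apply: mulr_ge0_le0 | apply: mulr_ge0]; try exact/ltW/pos; lra_bg.
move=> /(poly_ivt ab) [x /andP [ax xb]].
rewrite /root horner_fixed_poly; last by lra_bg.
rewrite mulf_eq0 gt_eqF ?pos //=; last by lra_bg.
by rewrite subr_eq0 => /eqP x_fixed; exists x; rewrite ?ax ?xb.
Qed.

(* F lam takes its values in (0, lam / gamma^d], so a fixed point lies in
   [F lam b, b] with b = lam / gamma^d. *)
Lemma Fd_fixed_exists (lam : R) : 0 < lam -> exists2 x, 0 < x & F lam x = x.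
Proof.
move=> lam_gt0; set b := lam * gamma^-1 ^+ d.
have b_gt0 : 0 < b by rewrite mulr_gt0 // exprn_gt0 // invr_gt0.
have Fb_le_b : F lam b <= b.
  rewrite Fd_mobius ler_wpM2l ?(ltW lam_gt0) //; apply: lerXn2r; rewrite ?nnegrE.
  - exact/ltW/mobius_gt0.
  - by rewrite invr_ge0 ltW.
  exact: mobius_le_inv.
have Fb_gt0 := Fd_gt0 lam_gt0 b_gt0.
have [x /andP [Fbx _] x_fixed] : exists2 x, F lam b <= x <= b & F lam x = x.
  apply: Fd_fixed_between => //.
  by rewrite [leRHS]Fd_mobius [leLHS]Fd_mobius ler_wpM2l ?(ltW lam_gt0) ?mobiusX_le.
by exists x => //; lra_bg.
Qed.

Lemma Fd_fixed_mono (lam mu x y : R) : 0 < lam -> lam <= mu -> 0 < x -> 0 < y ->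
  F lam x = x -> F mu y = y -> x <= y.
Proof.
move=> lam_gt0 lam_mu x_gt0 y_gt0 Fx Fy; rewrite leNgt; apply/negP => yx.
have : F lam x <= F mu y.
  rewrite !Fd_mobius; apply: ler_pM => //; first exact: ltW.
    exact/ltW/exprn_gt0/mobius_gt0.
  exact: mobiusX_le (ltW yx).
lra_bg.
Qed.

Lemma Fd_fixed_uniq (lam x y : R) : 0 < lam -> 0 < x -> 0 < y ->
  F lam x = x -> F lam y = y -> x = y.
Proof.
move=> lam_gt0 x_gt0 y_gt0 Fx Fy.
by apply/eqP; rewrite eq_le !(Fd_fixed_mono lam_gt0 (lexx lam)).
Qed.

Lemma Fd_fixed_within (k lam mu x y : R) : 1 <= k -> 0 < lam -> 0 < mu ->
  mu <= k * lam -> lam <= k * mu -> 0 < x -> 0 < y ->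
  F lam x = x -> F mu y = y -> x <= k * y /\ y <= k * x.
Proof.
move=> k_ge1 lam_gt0 mu_gt0 mu_le lam_le x_gt0 y_gt0 Fx Fy.
wlog lam_mu : lam mu x y lam_gt0 mu_gt0 mu_le lam_le x_gt0 y_gt0 Fx Fy / lam <= mu.
  move=> le_case; have [lam_mu | /ltW mu_lam] := lerP lam mu.
    exact: (le_case lam mu x y).
  by apply/and_comm; apply: (le_case mu lam y x).
have xy := Fd_fixed_mono lam_gt0 lam_mu x_gt0 y_gt0 Fx Fy.
have lam_y : lam * y <= mu * x.
  rewrite -{1}Fy -Fx !Fd_mobius mulrCA ler_wpM2l ?(ltW mu_gt0) //.
  by rewrite ler_wpM2l ?(ltW lam_gt0) ?mobiusX_le.
split; first exact: le_trans xy (ler_peMl (ltW y_gt0) k_ge1).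
rewrite -(ler_pM2l lam_gt0); nra.
Qed.

Lemma Fd_slope_within (k x y : R) : 1 <= k -> 0 < x -> 0 < y ->
  x <= k * y -> y <= k * x -> Fd_slope d beta gamma y <= k * Fd_slope d beta gamma x.
Proof.
move=> k_ge1 x_gt0 y_gt0 xy yx.
have D_gt0 (t : R) : 0 < t -> 0 < (beta * t + 1) * (t + gamma).
  by move=> t_gt0; have := mulr_ge0 beta_ge0 (ltW t_gt0); move=> ?; apply: mulr_gt0; lra_bg.
(* Termwise: beta x^2 y <= k beta x y^2, (1 + beta gamma) x y <= k (1 + beta gamma) x y
   and gamma y <= k gamma x. *)
have cross : y * ((beta * x + 1) * (x + gamma)) <= k * x * ((beta * y + 1) * (y + gamma)).
  have := ler_wpM2l (mulr_ge0 (mulr_ge0 beta_ge0 (ltW x_gt0)) (ltW y_gt0)) xy.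
  have bg1_ge0 : 0 <= (beta * gamma + 1) * (x * y).
    apply: mulr_ge0; last exact: mulr_ge0 (ltW x_gt0) (ltW y_gt0).
    by have := mulr_ge0 beta_ge0 (ltW gamma_gt0); lra.
  have := ler_wpM2l bg1_ge0 k_ge1.
  have := ler_wpM2l (ltW gamma_gt0) yx.
  lra_bg.
have c_ge0 : 0 <= d%:R * (1 - beta * gamma) by apply: mulr_ge0; [exact: ler0n | lra_bg].
rewrite /Fd_slope ler_pdivrMr ?D_gt0 //.
set c := d%:R * _; set Dx := (beta * x + 1) * _; set Dy := (beta * y + 1) * _.
have -> : k * (c * x / Dx) * Dy = c * (k * x * Dy) / Dx by ring.
by rewrite ler_pdivlMr ?D_gt0 // -[c * y * _]mulrA ler_wpM2l.
Qed.

Lemma d_unique_within (k lam mu delta delta' : R) : 1 <= k -> 0 < lam -> 0 < mu ->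
  mu <= k * lam -> lam <= k * mu -> k * (1 - delta) <= 1 - delta' ->
  d_unique d beta gamma lam delta -> d_unique d beta gamma mu delta'.
Proof.
move=> k_ge1 lam_gt0 mu_gt0 mu_le lam_le gap [x [x_gt0 [Fx [_ slope_x]]]].
have [y y_gt0 Fy] := Fd_fixed_exists mu_gt0.
have [xy yx] := Fd_fixed_within k_ge1 lam_gt0 mu_gt0 mu_le lam_le x_gt0 y_gt0 Fx Fy.
exists y; do 2!split=> //; split; first by move=> z z_gt0 Fz; apply: Fd_fixed_uniq Fz Fy.
apply: le_trans (Fd_slope_within k_ge1 x_gt0 y_gt0 xy yx) _.
by apply: le_trans gap; rewrite ler_wpM2l // (le_trans ler01).
Qed.

Lemma d_unique_apart (k lam mu delta s : R) : 1 <= k -> 0 < lam -> 0 < mu -> 0 < s ->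
  F mu s = s -> k * (1 - delta) < Fd_slope d beta gamma s ->
  d_unique d beta gamma lam delta -> ~ (mu <= k * lam /\ lam <= k * mu).
Proof.
move=> k_ge1 lam_gt0 mu_gt0 s_gt0 Fs gap [x [x_gt0 [Fx [_ slope_x]]]] [mu_le lam_le].
have [xs sx] := Fd_fixed_within k_ge1 lam_gt0 mu_gt0 mu_le lam_le x_gt0 s_gt0 Fx Fs.
have := Fd_slope_within k_ge1 x_gt0 s_gt0 xs sx.
have : k * Fd_slope d beta gamma x <= k * (1 - delta) by rewrite ler_wpM2l // (le_trans ler01).
lra.
Qed.

End FixedPoints.

Lemma sqrtr_lt1 (R : rcfType) (x : R) : x < 1 -> Num.sqrt x < 1.
Proof.
move=> x_lt1; have [x_lt0 | x_ge0] := ltrP x 0; first by rewrite ltr0_sqrtr.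
by rewrite -sqrtr1 ltr_sqrt.
Qed.

Lemma Delta_bar_gt0 (R : rcfType) (beta gamma : R) : beta * gamma < 1 ->
  0 < Delta_bar beta gamma.
Proof.
move=> /sqrtr_lt1 q_lt1; have q_ge0 := sqrtr_ge0 (beta * gamma).
by rewrite /Delta_bar divr_gt0 //; lra.
Qed.

Section Threshold.
Variables (R : rcfType) (beta gamma : R).
Hypotheses (beta_gt0 : 0 < beta) (gamma_gt0 : 0 < gamma).

Let s := Num.sqrt (gamma / beta).

Lemma sqrt_ratio_gt0 : 0 < s.
Proof. by rewrite sqrtr_gt0 divr_gt0. Qed.

Lemma beta_sqrt_ratio2 : beta * s ^+ 2 = gamma.
Proof. by rewrite sqr_sqrtr ?divr_ge0 ?ltW // mulrC divfK ?gt_eqF. Qed.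

Lemma sqrt_ratio_mobius : s * mobius beta gamma s = 1.
Proof.
rewrite /mobius mulrA mulrDr mulr1 mulrCA -expr2 beta_sqrt_ratio2 addrC divff //.
by rewrite gt_eqF // addr_gt0 ?sqrt_ratio_gt0.
Qed.

(* s^(d+1) is the threshold (gamma/beta)^((d+1)/2) for Delta = d + 1. *)
Lemma Fd_threshold_fixed d : Fd d beta gamma (s ^+ d.+1) s = s.
Proof. by rewrite Fd_mobius exprS -mulrA -exprMn sqrt_ratio_mobius expr1n mulr1. Qed.

Lemma Fd_slope_threshold d : beta * gamma < 1 ->
  Fd_slope d beta gamma s = d%:R / Delta_bar beta gamma.
Proof.
move=> bg_lt1; set q := Num.sqrt (beta * gamma).
have bs : beta * s = q.
  rewrite /q -beta_sqrt_ratio2 mulrA -expr2 -exprMn sqrtr_sqr ger0_norm //.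
  by rewrite mulr_ge0 ?ltW ?sqrt_ratio_gt0.
have q2 : q ^+ 2 = beta * gamma by rewrite -bs -beta_sqrt_ratio2; ring.
have g : gamma = q * s by rewrite -bs -beta_sqrt_ratio2; ring.
have q_ge0 : 0 <= q by rewrite -bs mulr_ge0 ?ltW ?sqrt_ratio_gt0.
have q_lt1 : q < 1 by exact: sqrtr_lt1.
have s_gt0 := sqrt_ratio_gt0.
rewrite /Fd_slope /Delta_bar -/q bs -q2 g; field.
by apply/and3P; split; rewrite gt_eqF //; nra.
Qed.

End Threshold.

Theorem lemma7p10 (R : rcfType) (V : finType) (E : rel V) (Delta : nat)
  (beta gamma lambda delta : R) :
  simple_graph E -> max_degree E = Delta ->
  antiferro beta gamma lambda -> 0 < delta < 1 ->
  (forall d : nat, (1 <= d)%N -> (d < Delta)%N ->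
     d_unique d beta gamma lambda delta ->
     d_unique d beta gamma (shifted beta gamma Delta lambda delta) (delta / 2))
  /\
  (d_unique (Delta - 1) beta gamma lambda delta ->
   (1 - delta / 2) * Delta_bar beta gamma < (Delta - 1)%:R ->
   (le_thr beta gamma Delta lambda ->
      lt_thr beta gamma Delta (shifted beta gamma Delta lambda delta)) /\
   (~ le_thr beta gamma Delta lambda ->
      gt_thr beta gamma Delta (shifted beta gamma Delta lambda delta))).
Proof.
move=> _ _ [b_ge0 [_ [g_gt0 [lam_gt0 bg_lt1]]]] /andP [delta_gt0 delta_lt1].
set k := 1 + delta / 2.
have k_ge1 : 1 <= k by rewrite /k; lra.
have k_gt0 : 0 < k by lra.
have k_gap : k * (1 - delta) <= 1 - delta / 2 by rewrite /k; nra.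
split.
  move=> d _ _; rewrite /shifted -/k; case: ifP => _;
    apply: (d_unique_within b_ge0 g_gt0 bg_lt1 k_ge1) => //.
  - by rewrite mulr_gt0.
  - by rewrite mulrA ler_peMl ?(ltW lam_gt0) ?mulr_ege1.
  - by rewrite mulr_gt0 // invr_gt0.
  - by rewrite ler_wpM2r ?(ltW lam_gt0) // (le_trans _ k_ge1) // invf_le1.
  by rewrite mulrA divff ?gt_eqF ?mul1r.
case: Delta => [|d] U Dbar_lt.
  by have := Delta_bar_gt0 bg_lt1; move: Dbar_lt; rewrite sub0n; nra.
move: U Dbar_lt; rewrite subn1 /= => U Dbar_lt.
rewrite /le_thr /lt_thr /gt_thr /shifted.
have [-> | b_neq0] := eqVneq beta 0; first by split=> [_ | []]; left.
have b_gt0 : 0 < beta by rewrite lt_def b_neq0.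
rewrite /= -/k.
set T := Num.sqrt (gamma / beta) ^+ d.+1.
have T_gt0 : 0 < T by rewrite exprn_gt0 // sqrt_ratio_gt0.
have apart : ~ (T <= k * lambda /\ lambda <= k * T).
  apply: (d_unique_apart b_ge0 g_gt0 bg_lt1 k_ge1 lam_gt0 T_gt0
    (sqrt_ratio_gt0 b_gt0 g_gt0) (Fd_threshold_fixed b_gt0 g_gt0 d) _ U).
  rewrite Fd_slope_threshold // ltr_pdivlMr ?Delta_bar_gt0 //.
  by apply: le_lt_trans Dbar_lt; rewrite ler_wpM2r // ltW // Delta_bar_gt0.
split=> [[b0 | lam_le] | not_le]; first by move/eqP: b_neq0.
  rewrite lam_le; right; rewrite ltNge; apply/negP => T_le.
  by apply: apart; split=> //; apply: le_trans lam_le (ler_peMl (ltW T_gt0) k_ge1).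
have T_lt : T < lambda by rewrite ltNge; apply/negP => lam_le; apply: not_le; right.
rewrite leNgt T_lt /=; split; first exact/eqP.
rewrite ltr_pdivlMl // ltNge; apply/negP => lam_le.
by apply: apart; split=> //; apply: le_trans (ltW T_lt) (ler_peMl (ltW lam_gt0) k_ge1).
Qed.
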